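(* Let $G$ be a circle of circumference $1$, let $\mathbf{x}\in G^n$ be such that the agents are on one semicircle, let $i\in N$ and $x_i'\in G$ be such that the agents in $\mathbf{x}'=(x_i',\mathbf{x}_{-i})$ are also on one semicircle. Then $\mathrm{cost}(\mathrm{lrm}(\mathbf{x}),x_i)\le\mathrm{cost}(\mathrm{lrm}(\mathbf{x}'),x_i)$.
   Context: $G$ is a circle of circumference $1$; $d(x,y)$ is the length of the shorter arc. For a distribution $P$ on $G$, $\mathrm{cost}(P,x_i)=\mathbb{E}_{y\sim P}[d(x_i,y)]$. Agents are on one semicircle if all locations lie in some closed arc of length $1/2$. LRM mechanism: for such a profile fix a closed arc of minimal length containing all agent locations (length at most $1/2$), with endpoints $l,r$ (agent locations); $\mathrm{lrm}(\mathbf{x})$ returns $l$ with probability $1/4$, $r$ with probability $1/4$, and the midpoint of that arc with probability $1/2$. *)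

From Stdlib Require Import Reals Lra List.
Open Scope R_scope.

(* The circle G of circumference 1 is R / Z; a point is represented by any
   real number, two reals denoting the same point iff they differ by an integer. *)

(* Counter-clockwise arc length from x to y, in [0,1). *)
Definition ccw (x y : R) : R := frac_part (y - x).

Definition d (x y : R) : R := Rmin (ccw x y) (ccw y x).

(* Finitely supported probability distributions on G: lists of (weight, point). *)
Definition dist := list (R * R).

Definition cost (P : dist) (y : R) : R :=
  fold_right (fun pz acc => fst pz * d y (snd pz) + acc) 0 P.

(* Profiles: x : nat -> R, agent j < n located at x j. *)

Definition in_arc (a L p : R) : Prop := ccw a p <= L.

Definition on_semicircle (n : nat) (x : nat -> R) : Prop :=
  exists a : R, forall j, (j < n)%nat -> in_arc a (1/2) (x j).

Definition covers (n : nat) (x : nat -> R) (l r : R) : Prop :=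
  forall j, (j < n)%nat -> in_arc l (ccw l r) (x j).

Definition min_arc (n : nat) (x : nat -> R) (l r : R) : Prop :=
  (exists j, (j < n)%nat /\ l = x j) /\
  (exists k, (k < n)%nat /\ r = x k) /\
  covers n x l r /\
  (forall a L : R, 0 <= L -> (forall j, (j < n)%nat -> in_arc a L (x j)) ->
       ccw l r <= L).

Definition lrm_dist (l r : R) : dist :=
  (1/4, l) :: (1/4, r) :: (1/2, l + ccw l r / 2) :: nil.

Definition update (x : nat -> R) (i : nat) (xi' : R) : nat -> R :=
  fun j => if Nat.eqb j i then xi' else x j.

From Stdlib Require Import Reals Lra Lia ZArith.
Open Scope R_scope.

(* Write y := x_i, L := ccw l r <= 1/2 (the minimal arc fits in
   the semicircle), and compare both costs with distances to agents.
   - Upper bound: for y on an arc [l, r] of length at most 1/2, the LRM cost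
     at y is at most half the distance from y to the farther endpoint:
     if y is at ccw-offset t from l, the three outcomes are at distances
     t, L - t and |L/2 - t|, and (t + (L - t) + 2 |L/2 - t|) / 4 = max / 2.
   - Lower bound: for any point p of an arc [l', r'] of length at most 1/2,
     d(y, p) <= d(y, mid') + L'/2 <= d(y, mid') + (d(y,l') + d(y,r')) / 2,
     i.e. the LRM cost of [l', r'] at y is at least d(y, p) / 2.
   The endpoints l, r are agent locations x_k.  For k <> i the agent k does
   not move, so x_k lies on the new minimal arc and the lower bound applies;
   for k = i the distance is 0.  Chaining both bounds gives the theorem. *)

(* Distance from a real to the nearest integer: d x y = circ_norm (y - x). *)
Definition circ_norm (u : R) : R := Rmin (frac_part u) (frac_part (- u)).

Lemma d_circ_norm x y : d x y = circ_norm (y - x).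
Proof.
  unfold d, ccw, circ_norm. replace (x - y) with (- (y - x)) by ring.
  reflexivity.
Qed.

Lemma frac_part_shift y (k : Z) : 0 <= y - IZR k < 1 -> frac_part y = y - IZR k.
Proof.
  intros H. unfold frac_part, Int_part.
  assert (Hup : up y = (k + 1)%Z).
  { symmetry; apply tech_up; rewrite plus_IZR; simpl; lra. }
  rewrite Hup. replace (k + 1 - 1)%Z with k by ring. reflexivity.
Qed.

Lemma frac_part_decomp u : u = frac_part u + IZR (Int_part u).
Proof. unfold frac_part; ring. Qed.

Lemma frac_part_opp u :
  (frac_part u = 0 /\ frac_part (- u) = 0) \/ frac_part (- u) = 1 - frac_part u.
Proof.
  pose proof (frac_part_decomp u) as E. destruct (base_fp u).
  destruct (Req_dec (frac_part u) 0) as [Hf | Hf].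
  - left. split; [exact Hf |].
    rewrite (frac_part_shift (- u) (- Int_part u)); rewrite opp_IZR; lra.
  - right. rewrite (frac_part_shift (- u) (- Int_part u - 1)).
    + rewrite minus_IZR, opp_IZR; simpl; lra.
    + rewrite minus_IZR, opp_IZR; simpl; lra.
Qed.

Lemma circ_norm_nonneg u : 0 <= circ_norm u.
Proof.
  unfold circ_norm. destruct (base_fp u), (base_fp (- u)).
  apply Rmin_glb; lra.
Qed.

Lemma circ_norm_le_dist_int u (k : Z) : circ_norm u <= Rabs (u - IZR k).
Proof.
  pose proof (frac_part_decomp u) as E. destruct (base_fp u).
  assert (Hl : circ_norm u <= frac_part u) by apply Rmin_l.
  assert (Hr : circ_norm u <= frac_part (- u)) by apply Rmin_r.
  assert (Hopp : frac_part (- u) <= 1 - frac_part u)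
    by (destruct (frac_part_opp u); lra).
  destruct (Z_le_gt_dec k (Int_part u)) as [Hk | Hk].
  - apply IZR_le in Hk. unfold Rabs; destruct (Rcase_abs _); lra.
  - assert (Hk' : (Int_part u + 1 <= k)%Z) by lia.
    apply IZR_le in Hk'. rewrite plus_IZR in Hk'; simpl in Hk'.
    unfold Rabs; destruct (Rcase_abs _); lra.
Qed.

Lemma circ_norm_attained u : exists k, circ_norm u = Rabs (u - IZR k).
Proof.
  unfold circ_norm, Rmin. destruct (Rle_dec _ _).
  - exists (Int_part u). pose proof (frac_part_decomp u). destruct (base_fp u).
    rewrite Rabs_pos_eq; lra.
  - exists (- Int_part (- u))%Z.
    pose proof (frac_part_decomp (- u)). destruct (base_fp (- u)).
    rewrite opp_IZR.
    replace (u - - IZR (Int_part (- u))) with (- frac_part (- u)) by lra.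
    rewrite Rabs_Ropp, Rabs_pos_eq; lra.
Qed.

Lemma circ_norm_triangle u v : circ_norm (u + v) <= circ_norm u + circ_norm v.
Proof.
  destruct (circ_norm_attained u) as [k1 H1], (circ_norm_attained v) as [k2 H2].
  rewrite H1, H2. eapply Rle_trans; [apply (circ_norm_le_dist_int _ (k1 + k2)) |].
  rewrite plus_IZR.
  replace (u + v - (IZR k1 + IZR k2)) with ((u - IZR k1) + (v - IZR k2)) by ring.
  apply Rabs_triang.
Qed.

Lemma circ_norm_small u : frac_part u <= 1/2 -> circ_norm u = frac_part u.
Proof.
  intros Hh. unfold circ_norm. apply Rmin_left.
  destruct (frac_part_opp u); lra.
Qed.

Lemma d_nonneg x y : 0 <= d x y.
Proof. rewrite d_circ_norm. apply circ_norm_nonneg. Qed.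

Lemma d_sym x y : d x y = d y x.
Proof. unfold d. apply Rmin_comm. Qed.

Lemma d_triangle x y z : d x z <= d x y + d y z.
Proof.
  rewrite !d_circ_norm. replace (z - x) with ((y - x) + (z - y)) by ring.
  apply circ_norm_triangle.
Qed.

Lemma d_ccw_small x y : ccw x y <= 1/2 -> d x y = ccw x y.
Proof. intros H. rewrite d_circ_norm. apply circ_norm_small, H. Qed.

Lemma ccw_range x y : 0 <= ccw x y < 1.
Proof. unfold ccw. destruct (base_fp (y - x)); lra. Qed.

Lemma ccw_self x : ccw x x = 0.
Proof. unfold ccw. rewrite (frac_part_shift _ 0); simpl; lra. Qed.

Lemma ccw_split l p r : ccw l p <= ccw l r -> ccw p r = ccw l r - ccw l p.
Proof.
  unfold ccw. intros H.
  pose proof (frac_part_decomp (r - l)). pose proof (frac_part_decomp (p - l)).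
  destruct (base_fp (r - l)), (base_fp (p - l)).
  rewrite (frac_part_shift _ (Int_part (r - l) - Int_part (p - l)));
    rewrite minus_IZR; lra.
Qed.

Lemma ccw_from_shift l p c : 0 <= ccw l p - c < 1 -> ccw (l + c) p = ccw l p - c.
Proof.
  unfold ccw. intros H. pose proof (frac_part_decomp (p - l)).
  rewrite (frac_part_shift _ (Int_part (p - l))); lra.
Qed.

Lemma ccw_to_shift l p c : 0 <= c - ccw l p < 1 -> ccw p (l + c) = c - ccw l p.
Proof.
  unfold ccw. intros H. pose proof (frac_part_decomp (p - l)).
  rewrite (frac_part_shift _ (- Int_part (p - l))); rewrite opp_IZR; lra.
Qed.

Lemma cost_lrm l r y :
  cost (lrm_dist l r) y =
  1/4 * d y l + 1/4 * d y r + 1/2 * d y (l + ccw l r / 2).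
Proof. unfold cost, lrm_dist; simpl. ring. Qed.

Lemma cost_lrm_nonneg l r y : 0 <= cost (lrm_dist l r) y.
Proof.
  rewrite cost_lrm.
  pose proof (d_nonneg y l). pose proof (d_nonneg y r).
  pose proof (d_nonneg y (l + ccw l r / 2)). lra.
Qed.

Lemma d_midpoint_le l r p : ccw l p <= ccw l r ->
  d (l + ccw l r / 2) p <= ccw l r / 2.
Proof.
  intros Hp. pose proof (ccw_range l p). pose proof (ccw_range l r).
  unfold d. destruct (Rle_dec (ccw l r / 2) (ccw l p)).
  - eapply Rle_trans; [apply Rmin_l |]. rewrite ccw_from_shift; lra.
  - eapply Rle_trans; [apply Rmin_r |]. rewrite ccw_to_shift; lra.
Qed.

Lemma cost_lrm_lower l r y p : ccw l r <= 1/2 -> ccw l p <= ccw l r ->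
  d y p / 2 <= cost (lrm_dist l r) y.
Proof.
  intros HL Hp. rewrite cost_lrm.
  assert (Hlen : ccw l r <= d y l + d y r).
  { rewrite <- (d_ccw_small l r HL), (d_sym y l). apply d_triangle. }
  pose proof (d_triangle y (l + ccw l r / 2) p).
  pose proof (d_midpoint_le l r p Hp).
  lra.
Qed.

Lemma cost_lrm_upper l r y : ccw l r <= 1/2 -> ccw l y <= ccw l r ->
  cost (lrm_dist l r) y <= Rmax (d y l) (d y r) / 2.
Proof.
  intros HL Hy. rewrite cost_lrm.
  pose proof (ccw_range l y). pose proof (ccw_range l r).
  assert (Hl : d y l = ccw l y)
    by (rewrite d_sym; apply d_ccw_small; lra).
  assert (Hr : d y r = ccw l r - ccw l y)
    by (rewrite d_ccw_small; rewrite (ccw_split l y r Hy); lra).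
  assert (Hmid : d y (l + ccw l r / 2) <= Rabs (ccw l r / 2 - ccw l y)).
  { unfold d, Rabs. destruct (Rcase_abs _).
    - eapply Rle_trans; [apply Rmin_r |]. rewrite ccw_from_shift; lra.
    - eapply Rle_trans; [apply Rmin_l |]. rewrite ccw_to_shift; lra. }
  rewrite Hl, Hr. unfold Rmax, Rabs in *.
  destruct (Rle_dec _ _), (Rcase_abs _); lra.
Qed.

Lemma min_arc_short n x l r :
  on_semicircle n x -> min_arc n x l r -> ccw l r <= 1/2.
Proof.
  intros [a Ha] (_ & _ & _ & Hmin). apply (Hmin a (1/2)); [lra | exact Ha].
Qed.

Lemma deviation_cost_lower n x i xi' l' r' k :
  on_semicircle n (update x i xi') -> min_arc n (update x i xi') l' r' ->
  (k < n)%nat -> d (x i) (x k) / 2 <= cost (lrm_dist l' r') (x i).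
Proof.
  intros Hsemi Harc Hk.
  destruct (Nat.eq_dec k i) as [-> | Hki].
  - rewrite d_ccw_small, ccw_self; [| rewrite ccw_self; lra].
    pose proof (cost_lrm_nonneg l' r' (x i)). lra.
  - apply cost_lrm_lower; [exact (min_arc_short _ _ _ _ Hsemi Harc) |].
    destruct Harc as (_ & _ & Hcov & _).
    specialize (Hcov k Hk). unfold in_arc, update in Hcov.
    apply Nat.eqb_neq in Hki. rewrite Hki in Hcov. exact Hcov.
Qed.

Theorem mainTheorem10 (n : nat) (x : nat -> R) (i : nat) (xi' : R)
  (l r l' r' : R) :
  (i < n)%nat ->
  on_semicircle n x ->
  on_semicircle n (update x i xi') ->
  min_arc n x l r ->
  min_arc n (update x i xi') l' r' ->
  cost (lrm_dist l r) (x i) <= cost (lrm_dist l' r') (x i).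
Proof.
  intros Hi Hsemi Hsemi' Harc Harc'.
  pose proof (min_arc_short _ _ _ _ Hsemi Harc) as Hshort.
  destruct Harc as ((j & Hj & ->) & (k & Hk & ->) & Hcov & _).
  eapply Rle_trans; [apply cost_lrm_upper; [exact Hshort | exact (Hcov i Hi)] |].
  pose proof (deviation_cost_lower _ _ _ _ _ _ j Hsemi' Harc' Hj).
  pose proof (deviation_cost_lower _ _ _ _ _ _ k Hsemi' Harc' Hk).
  unfold Rmax; destruct (Rle_dec _ _); lra.
Qed.
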